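(* Let $h\ge1$ and let $P(u)=\sum_{s\in\mathcal{S}}p_su^s$ be the step polynomial of a finite step set $\mathcal{S}\subset\mathbb{Z}$ with weights $p_s>0$, which is symmetric, i.e. $P(u)=P(1/u)$, and satisfies $\max\mathcal{S}=h$. For $k\ge1$ let $G_{0,k}(z)$ be the generating function (by length, counted with weight = product of step weights) of positive walks from the origin to altitude $k$, i.e. walks $0=y_0,\dots,y_n=k$ with steps in $\mathcal{S}$ and $y_i\ge1$ for $1\le i\le n$, and let $M_{>0}(z)$ be the generating function of positive meanders, i.e. walks $0=y_0,\dots,y_n$ with steps in $\mathcal{S}$ and $y_i\ge1$ for $1\le i\le n$ (ending anywhere; including the empty walk). Let $u_1(z),\dots,u_h(z)$ be the small roots of $1-zP(u)=0$, i.e. the $h$ roots (Puiseux series in $z$) with $\lim_{z\to0}u_i(z)=0$. Then $$M_{>0}(z)=1+\sum_{k\ge1}G_{0,k}(z)=\prod_{i=1}^h\frac{1}{1-u_i(z)},\qquad G_{0,k}(z)=h_k\big(u_1(z),\dots,u_h(z)\big)\quad(k\ge1),$$ where $h_k(x_1,\dots,x_h)=\sum_{i_1+\dots+i_h=k,\ i_1,\dots,i_h\ge0}x_1^{i_1}\cdots x_h^{i_h}$ is the complete homogeneous symmetric polynomial of degree $k$. *)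

From HB Require Import structures.
From mathcomp Require Import all_boot all_order all_algebra.
From mathcomp Require Import reals complex.
Set Implicit Arguments. Unset Strict Implicit. Unset Printing Implicit Defensive.
Import Order.TTheory GRing.Theory Num.Theory.
Local Open Scope ring_scope.

Section Defs.
Variable R : realType.
Local Notation C := R[i].

Definition stepP (S : seq int) (p : int -> R) (u : C) : C :=
  \sum_(s <- S) (p s)%:C%C * u ^ s.

(* walks of length n: sequences of n steps, the j-th step being S_(w j) *)
Definition wstep (S : seq int) n (w : {ffun 'I_n -> 'I_(size S)}) (j : 'I_n) : int :=
  nth 0 S (w j).

Definition walt (S : seq int) n (w : {ffun 'I_n -> 'I_(size S)}) (m : nat) : int :=
  \sum_(j < n | (j < m)%N) wstep w j.

Definition wpos (S : seq int) n (w : {ffun 'I_n -> 'I_(size S)}) : bool :=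
  [forall m : 'I_n, 0 < walt w m.+1].

Definition wweight (S : seq int) (p : int -> R) n (w : {ffun 'I_n -> 'I_(size S)}) : R :=
  \prod_(j < n) p (wstep w j).

(* coefficient of z^n in G_{0,k}(z) : positive walks of length n from 0 to k *)
Definition Gcoef (S : seq int) (p : int -> R) (k : int) (n : nat) : R :=
  \sum_(w : {ffun 'I_n -> 'I_(size S)} | wpos w && (walt w n == k)) wweight p w.

(* coefficient of z^n in M_{>0}(z) : positive meanders of length n *)
Definition Mcoef (S : seq int) (p : int -> R) (n : nat) : R :=
  \sum_(w : {ffun 'I_n -> 'I_(size S)} | wpos w) wweight p w.

Definition series_to (a : nat -> C) (l : C) : Prop :=
  forall e : R, 0 < e -> exists N : nat, forall n : nat, (N <= n)%N ->
    `| \sum_(i < n) a i - l | < e%:C%C.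

Definition hcomplete (h k : nat) (x : 'I_h -> C) : C :=
  \sum_(t : {ffun 'I_h -> 'I_k.+1} | (\sum_(i < h) (t i : nat) == k)%N)
     \prod_(i < h) x i ^+ t i.

(* u^h (1 - z P(u)), a polynomial in u when min S >= -h *)
Definition kernel_poly (S : seq int) (p : int -> R) (h : nat) (z : C) : {poly C} :=
  'X^h - z *: \sum_(s <- S) (p s)%:C%C *: 'X^(absz (s + h%:Z)).

(* u_1,...,u_h are the small roots of 1 - z P(u) = 0 : near z = 0 (z <> 0) they
   are roots (with multiplicity) of u^h (1 - z P(u)) and each tends to 0 *)
Definition small_roots (S : seq int) (p : int -> R) (h : nat)
  (u : 'I_h -> C -> C) : Prop :=
  (exists r : R, 0 < r /\ forall z : C, 0 < `|z| < r%:C%C ->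
      (\prod_(i < h) ('X - (u i z)%:P)) %| kernel_poly S p h z) /\
  (forall i : 'I_h, forall e : R, 0 < e -> exists d : R, 0 < d /\
      forall z : C, 0 < `|z| < d%:C%C -> `|u i z| < e%:C%C).

End Defs.

From HB Require Import structures.
From mathcomp Require Import all_boot all_order all_algebra.
From mathcomp Require Import reals complex.
From mathcomp Require Import zify ring.
Import Order.TTheory GRing.Theory Num.Theory.
Local Open Scope ring_scope.

(* Since [P(u) = P(1/u)], the kernel [u^h (1 - z P(u))] is self-reciprocal,
   so its divisibility by [prod_i (u - u_i)] yields a factorisation
   [u^h (1 - z P(u)) = M(u) prod_i (1 - u_i u)] with [deg M <= h].
   Multiplying by [sum_k h_k(u_1,..,u_h) u^k = prod_i (1 - u_i u)^-1] shows
   that [g_k = h_k(u_1,..,u_h)] (with [g_k = 0] for [k < 0]) satisfies the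
   recurrence [g_k = z sum_s p_s g_(k-s)] (k >= 1), [g_0 = 1], which also
   characterises the series [G_(0,k)] by a last-step decomposition of walks.
   For small [z] the recurrence is a contraction on bounded sequences, so the
   partial sums of [G_(0,k)] converge geometrically to [h_k]; summing over
   the altitude [k] gives [M_(>0) = sum_k h_k = prod_i (1 - u_i)^-1]. *)

Set Implicit Arguments.
Unset Strict Implicit.
Unset Printing Implicit Defensive.

Section NumBounds.
Variable F : numFieldType.

Lemma half_ge0 : 0 <= 2^-1 :> F.
Proof. by rewrite invr_ge0. Qed.

Lemma half_le1 : 2^-1 <= 1 :> F.
Proof. by rewrite invf_le1 ?ltr0n // ler1n. Qed.

Lemma quarter_le_half : 4^-1 <= 2^-1 :> F.
Proof. by rewrite lef_pV2 ?posrE ?ltr0n // ler_nat. Qed.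

Lemma sum_expr_half_le2 K : \sum_(j < K) (2^-1 : F) ^+ j <= 2.
Proof.
have -> : \sum_(j < K) (2^-1 : F) ^+ j = 2 - 2 * 2^-1 ^+ K.
  elim: K => [|K IH]; first by rewrite big_ord0 expr0 mulr1 subrr.
  have two_neq0 : (2 : F) != 0 by rewrite pnatr_eq0.
  by rewrite big_ord_recr /= IH exprS; field.
by rewrite gerBl mulr_ge0 // exprn_ge0 // half_ge0.
Qed.

Lemma norm_le_half_lt1 (a : F) : `|a| <= 2^-1 -> `|a| < 1.
Proof. by move/le_lt_trans; apply; rewrite invf_lt1 ?ltr0n // ltr1n. Qed.

Lemma subr1_neq0 (a : F) : `|a| < 1 -> 1 - a != 0.
Proof. by apply: contraTneq => /subr0_eq <-; rewrite normr1 ltxx. Qed.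

Lemma norm_inv1B_le2 (a : F) : `|a| <= 2^-1 -> `|(1 - a)^-1| <= 2.
Proof.
move=> a_le; have half_le : 2^-1 <= `|1 - a|.
  apply: le_trans (lerB_dist _ _); rewrite normr1 lerBrDr.
  by rewrite [X in _ <= X](splitr 1) mul1r lerD2l.
have half_gt0 : 0 < 2^-1 :> F by rewrite invr_gt0 ltr0n.
rewrite normfV -[X in _ <= X]invrK lef_pV2 // posrE.
exact: lt_le_trans half_le.
Qed.

Lemma prod1B_bounds n (w : 'I_n -> F) (d : F) : 0 <= d <= 1 ->
  (forall i, `|w i| <= d) ->
  `|\prod_i (1 - w i)| <= 2 ^+ n /\ `|\prod_i (1 - w i) - 1| <= (n * 2 ^ n)%:R * d.
Proof.
move=> /andP [d_ge0 d_le1] w_le.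
have w1_le i : `|1 - w i| <= 2.
  apply: le_trans (ler_normB _ _) _; rewrite normr1.
  by rewrite [2 : F](_ : _ = 1 + 1) // lerD2l (le_trans (w_le i)).
elim: n w w_le w1_le => [|n IH] w w_le w1_le.
  by rewrite big_ord0 normr1 subrr normr0 expr0 mul0r lexx.
rewrite big_ord_recr /=.
have [IH1 IH2] := IH (fun i => w (widen_ord (leqnSn n) i)) (fun=> w_le _) (fun=> w1_le _).
set P := \prod_(i < n) _ in IH1 IH2 *.
split; first by rewrite normrM exprSr ler_pM.
have -> : P * (1 - w ord_max) - 1 = (P - 1) - P * w ord_max by ring.
apply: le_trans (ler_normB _ _) _; rewrite normrM.
apply: le_trans (lerD IH2 (ler_pM _ _ IH1 (w_le ord_max))) _ => //.
rewrite -mulrDl ler_wpM2r // -natrX -natrD ler_nat expnS; lia.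
Qed.

Lemma sum_monomials_le h K m (P : pred {ffun 'I_h -> 'I_K}) (x : 'I_h -> F) :
  (forall i, `|x i| <= 4^-1) -> (forall f, P f -> (m <= \sum_i (f i : nat))%N) ->
  \sum_(f | P f) `|\prod_i x i ^+ f i| <= 2 ^+ h * 2^-1 ^+ m.
Proof.
move=> x_le P_deg.
(* [|x^f| <= 4^-|f| = 2^-|f| * 2^-|f|]: one factor is at most [2^-m], the other
   is summable over all [f]. *)
have mon_le f : P f -> `|\prod_i x i ^+ f i| <= 2^-1 ^+ m * \prod_i 2^-1 ^+ f i.
  move=> Pf; rewrite normr_prod.
  apply: (@le_trans _ _ (\prod_i (2^-1 ^+ f i * 2^-1 ^+ f i))).
    apply: ler_prod => i _; rewrite normr_ge0 /= normrX -exprMn.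
    apply: lerXn2r; rewrite ?nnegrE ?normr_ge0 ?mulr_ge0 ?half_ge0 //.
    by rewrite -invfM -natrM.
  rewrite big_split /= [X in X * _ <= _]prodrXr ler_wpM2r ?prodr_ge0 //.
    by move=> i _; rewrite exprn_ge0 ?half_ge0.
  rewrite -(subnK (P_deg f Pf)) exprD ler_piMl ?exprn_ge0 ?half_ge0 //.
  by rewrite exprn_ile1 ?half_ge0 ?half_le1.
apply: le_trans (ler_sum _ mon_le) _.
rewrite -mulr_sumr mulrC ler_wpM2r ?exprn_ge0 ?half_ge0 //.
apply: (@le_trans _ _ (\sum_(f : {ffun 'I_h -> 'I_K}) \prod_i 2^-1 ^+ f i)).
  rewrite [X in _ <= X](bigID P) /= lerDl sumr_ge0 // => f _.
  by rewrite prodr_ge0 // => i _; rewrite exprn_ge0 ?half_ge0.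
rewrite -(bigA_distr_bigA (fun (i : 'I_h) (j : 'I_K) => (2^-1 : F) ^+ j)) /=.
apply: (@le_trans _ _ (\prod_(i < h) (2 : F))); last by rewrite prodr_const card_ord.
rewrite ler_prod // => i _.
by rewrite sum_expr_half_le2 sumr_ge0 // => j _; rewrite exprn_ge0 ?half_ge0.
Qed.

End NumBounds.

Section GeometricSeries.
Variable R : realType.
Local Notation C := R[i].

Lemma expr_half_lt (c : nat) (e : R) : 0 < e ->
  exists N, forall n, (N <= n)%N -> (c%:R : C) * 2^-1 ^+ n < e%:C%C.
Proof.
move=> e_gt0; have ce_ge0 : 0 <= c%:R / e by rewrite divr_ge0 // ltW.
exists (Num.Def.archi_bound (c%:R / e)) => n Nn.
have ce_lt : c%:R / e < (2 ^ n)%:R.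
  apply: lt_le_trans (archi_boundP ce_ge0) _; rewrite ler_nat.
  exact: leq_trans Nn (ltnW (ltn_expl n (ltnSn 1))).
have : (c%:R : R) * 2^-1 ^+ n < e.
  by rewrite exprVn -natrX ltr_pdivrMr ?ltr0n ?expn_gt0 // mulrC -ltr_pdivrMr.
by rewrite -ltcR rmorphM rmorph_nat rmorphXn fmorphV rmorph_nat.
Qed.

Lemma series_to_geometric (a : nat -> C) l (c : nat) :
  (forall n, `|\sum_(i < n) a i - l| <= c%:R * 2^-1 ^+ n) -> series_to a l.
Proof.
move=> a_le e e_gt0; have [N HN] := expr_half_lt c e_gt0.
by exists N => n Nn; apply: le_lt_trans (a_le n) (HN n Nn).
Qed.

End GeometricSeries.

Section Walks.
Variables (R : realType) (S : seq int) (p : int -> R).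
Local Notation T := 'I_(size S).
Local Notation C := R[i].

Definition wrcons n (w : {ffun 'I_n -> T}) (c : T) : {ffun 'I_n.+1 -> T} :=
  [ffun j : 'I_n.+1 => oapp w c (insub (val j))].

Lemma wrcons_widen n (w : {ffun 'I_n -> T}) c j :
  wrcons w c (widen_ord (leqnSn n) j) = w j.
Proof. by rewrite ffunE /= valK. Qed.

Lemma wrcons_last n (w : {ffun 'I_n -> T}) c : wrcons w c ord_max = c.
Proof. by rewrite ffunE /= insubF // ltnn. Qed.

Lemma walt_rcons n (w : {ffun 'I_n -> T}) c m :
  walt (wrcons w c) m = walt w m + (if (n < m)%N then nth 0 S c else 0).
Proof.
rewrite /walt big_mkcond big_ord_recr /= -big_mkcond /= /wstep wrcons_last.
by congr (_ + _); apply: eq_bigr => j _; rewrite wrcons_widen.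
Qed.

Lemma walt_end n (w : {ffun 'I_n -> T}) m : (n <= m)%N -> walt w m = walt w n.
Proof.
move=> nm; apply: eq_bigl => j.
by rewrite ltn_ord (leq_trans (ltn_ord j) nm).
Qed.

Lemma wpos_rcons n (w : {ffun 'I_n -> T}) c :
  wpos (wrcons w c) = wpos w && (0 < walt w n + nth 0 S c).
Proof.
have walt_lt m : (m < n)%N -> walt (wrcons w c) m.+1 = walt w m.+1.
  by move=> mn; rewrite walt_rcons ltnNge mn addr0.
apply/forallP/andP => [wc_pos|[/forallP w_pos last_pos] m].
  split; last first.
    by have := wc_pos ord_max; rewrite walt_rcons ltnSn (walt_end _ (leqnSn n)).
  by apply/forallP => m; rewrite -walt_lt //; exact: (wc_pos (widen_ord (leqnSn n) m)).
case: (ltnP m n) => mn; first by rewrite walt_lt //; exact: (w_pos (Ordinal mn)).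
have -> : (m : nat) = n by apply/eqP; rewrite eqn_leq mn -ltnS ltn_ord.
by rewrite walt_rcons ltnSn (walt_end _ (leqnSn n)).
Qed.

Lemma wweight_rcons n (w : {ffun 'I_n -> T}) c :
  wweight p (wrcons w c) = wweight p w * p (nth 0 S c).
Proof.
rewrite /wweight big_ord_recr /= /wstep wrcons_last; congr (_ * _).
by apply: eq_bigr => j _; rewrite wrcons_widen.
Qed.

Lemma sum_wrcons n (F : {ffun 'I_n.+1 -> T} -> R) :
  \sum_v F v = \sum_(w : {ffun 'I_n -> T}) \sum_c F (wrcons w c).
Proof.
rewrite pair_big /= (reindex (fun wc : {ffun 'I_n -> T} * T => wrcons wc.1 wc.2)) //.
apply: onW_bij.
exists (fun v : {ffun 'I_n.+1 -> T} =>
          ([ffun j => v (widen_ord (leqnSn n) j)], v ord_max)).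
  move=> [w c] /=; congr (_, _); last by rewrite wrcons_last.
  by apply/ffunP => j; rewrite ffunE wrcons_widen.
move=> v /=; apply/ffunP => j; rewrite ffunE.
case: insubP => [j' _ j'j | jn] /=.
  by rewrite ffunE; congr (v _); apply: val_inj; rewrite /= j'j.
congr (v _); apply: val_inj => /=.
by have := ltn_ord j; rewrite ltnS leq_eqVlt (negbTE jn) orbF => /eqP.
Qed.

Lemma Gcoef0 k : Gcoef S p k 0 = (k == 0)%:R.
Proof.
have pos0 (w : {ffun 'I_0 -> T}) : wpos w by apply/forallP => -[].
rewrite /Gcoef (eq_bigl (fun=> k == 0)) => [|w]; last first.
  by rewrite pos0 /walt big_ord0 eq_sym.
case: (k == 0); last by rewrite big_pred0.
rewrite (eq_bigr (fun=> 1)) => [|w _]; last by rewrite /wweight big_ord0.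
by rewrite sumr_const card_ffun (card_ord 0) expn0.
Qed.

Lemma GcoefS n k : 0 < k ->
  Gcoef S p k n.+1 = \sum_(s <- S) p s * Gcoef S p (k - s) n.
Proof.
move=> k_gt0.
rewrite /Gcoef big_mkcond sum_wrcons exchange_big (big_nth 0) big_mkord.
apply: eq_bigr => c _; rewrite mulr_sumr [RHS]big_mkcond.
apply: eq_bigr => w _.
rewrite wpos_rcons walt_rcons ltnSn (walt_end _ (leqnSn n)) wweight_rcons.
have -> : (walt w n + nth 0 S c == k) = (walt w n == k - nth 0 S c).
  by apply/eqP/eqP => [<-|->]; rewrite ?addrK ?subrK.
case: eqP => [->|_]; last by rewrite !andbF.
by rewrite subrK k_gt0 !andbT; case: (wpos w); rewrite ?mulr0 // mulrC.
Qed.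

Lemma GcoefS_le0 n k : k <= 0 -> Gcoef S p k n.+1 = 0.
Proof.
move=> k_le0; rewrite /Gcoef big1 // => w /andP [/forallP w_pos /eqP wk].
by have := w_pos ord_max; rewrite /= wk ltNge k_le0.
Qed.

Lemma Gcoef_lt0 n k : k < 0 -> Gcoef S p k n = 0.
Proof.
case: n => [|n] k_lt0; last by rewrite GcoefS_le0 // ltW.
by rewrite Gcoef0 lt_eqF.
Qed.

Lemma wpos_walt_ge0 n (w : {ffun 'I_n -> T}) : wpos w -> 0 <= walt w n.
Proof.
case: n w => [|n] w w_pos; first by rewrite /walt big_ord0.
exact: ltW (forallP w_pos ord_max).
Qed.

Lemma walt_le_mul (h : nat) : (forall s, s \in S -> s <= h%:Z) ->
  forall n (w : {ffun 'I_n -> T}), walt w n <= (n * h)%:Z.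
Proof.
move=> Sle n w; rewrite /walt (eq_bigl xpredT) => [|j]; last by rewrite ltn_ord.
apply: le_trans (ler_sum _ (fun j _ => Sle _ (mem_nth 0 (ltn_ord (w j))))) _.
by rewrite sumr_const card_ord -mulr_natl PoszM natz.
Qed.

Lemma Mcoef_sum_Gcoef (h : nat) : (forall s, s \in S -> s <= h%:Z) ->
  forall n K, (n * h < K)%N -> Mcoef S p n = \sum_(k < K) Gcoef S p (k : nat)%:Z n.
Proof.
move=> Sle n K nhK; rewrite /Mcoef /Gcoef.
under [RHS]eq_bigr => k _ do rewrite big_mkcond.
rewrite exchange_big big_mkcond /=; apply: eq_bigr => w _.
case: (boolP (wpos w)) => w_pos /=; last by rewrite big1.
have w_ge0 := wpos_walt_ge0 w_pos.
have wK : (absz (walt w n) < K)%N.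
  by apply: leq_ltn_trans nhK; rewrite -lez_nat gez0_abs // walt_le_mul.
rewrite (bigD1 (Ordinal wK)) //= gez0_abs // eqxx big1 ?addr0 // => k kw.
by case: eqP => // wk; move: kw; rewrite -val_eqE /= wk absz_nat eqxx.
Qed.

Variable z : C.

Definition Gpartial N k : C := \sum_(n < N) (Gcoef S p k n)%:C%C * z ^+ n.

Lemma Gpartial_lt0 N k : k < 0 -> Gpartial N k = 0.
Proof.
by move=> k_lt0; rewrite /Gpartial big1 // => n _; rewrite Gcoef_lt0 // rmorph0 mul0r.
Qed.

Lemma GpartialS0 N : Gpartial N.+1 0 = 1.
Proof.
rewrite /Gpartial big_ord_recl Gcoef0 eqxx rmorph1 mulr1 big1 ?addr0 // => n _.
by rewrite GcoefS_le0 // rmorph0 mul0r.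
Qed.

Lemma GpartialS N k : 0 < k ->
  Gpartial N.+1 k = z * \sum_(s <- S) (p s)%:C%C * Gpartial N (k - s).
Proof.
move=> k_gt0; rewrite /Gpartial big_ord_recl Gcoef0 gt_eqF // rmorph0 mul0r add0r.
under eq_bigr => n _ do rewrite /= GcoefS // rmorph_sum /= mulr_suml.
rewrite exchange_big mulr_sumr; apply: eq_bigr => s _.
rewrite !mulr_sumr; apply: eq_bigr => n _.
rewrite rmorphM /= exprS; ring.
Qed.

Hypothesis ppos : forall s, s \in S -> 0 < p s.

Lemma Gpartial_error (g : int -> C) (B : C) N k :
  g 0 = 1 -> (forall j, j < 0 -> g j = 0) ->
  (forall j, 0 < j -> g j = z * \sum_(s <- S) (p s)%:C%C * g (j - s)) ->
  (forall j, `|g j| <= B) ->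
  `|g k - Gpartial N k| <= B * (`|z| * (\sum_(s <- S) p s)%:C%C) ^+ N.
Proof.
move=> g0 g_lt0 g_rec g_le; have B_ge0 := le_trans (normr_ge0 _) (g_le 0).
have p_ge0 s : s \in S -> 0 <= (p s)%:C%C :> C by move=> /ppos/ltW; rewrite lecR.
set P := (\sum_(s <- S) p s)%:C%C.
have P_ge0 : 0 <= P by rewrite /P rmorph_sum big_seq sumr_ge0.
elim: N k => [|N IH] k; first by rewrite /Gpartial big_ord0 subr0 mulr1.
case: (ltrgt0P k) => [k_gt0|k_lt0|->]; last 2 first.
- by rewrite g_lt0 // Gpartial_lt0 // subrr normr0 mulr_ge0 ?exprn_ge0 ?mulr_ge0.
- by rewrite g0 GpartialS0 subrr normr0 mulr_ge0 ?exprn_ge0 ?mulr_ge0.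
rewrite g_rec // GpartialS // -mulrBr -sumrB normrM.
have -> : B * (`|z| * P) ^+ N.+1 = `|z| * (P * (B * (`|z| * P) ^+ N)).
  by rewrite exprS; ring.
rewrite ler_wpM2l //; apply: le_trans (ler_norm_sum _ _ _) _.
rewrite {1}/P rmorph_sum mulr_suml big_seq [X in _ <= X]big_seq ler_sum // => s Ss.
by rewrite -mulrBr normrM ger0_norm ?ler_wpM2l ?p_ge0.
Qed.

End Walks.

Section CompleteHomogeneous.
Variables (R : realType) (h : nat).
Local Notation C := R[i].
Implicit Types (x : 'I_h -> C) (K k : nat).

Lemma hcomplete_ord K k x : (k < K)%N ->
  hcomplete k x = \sum_(f : {ffun 'I_h -> 'I_K} | (\sum_i (f i : nat) == k)%N)
                     \prod_i x i ^+ f i.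
Proof.
move=> kK.
pose widen (t : {ffun 'I_h -> 'I_k.+1}) := [ffun i => widen_ord kK (t i)].
pose narrow (f : {ffun 'I_h -> 'I_K}) := [ffun i => inord (f i) : 'I_k.+1].
rewrite (reindex_onto widen narrow) => [|f /eqP fk]; last first.
  apply/ffunP => i; rewrite !ffunE; apply: val_inj; rewrite /= inordK //.
  by rewrite ltnS -fk (bigD1 i) //= leq_addr.
apply: eq_big => [t|t _]; last by apply: eq_bigr => i _; rewrite ffunE.
have -> : narrow (widen t) == t.
  by apply/eqP/ffunP => i; rewrite !ffunE; apply: val_inj; rewrite /= inord_val.
by rewrite andbT; congr (_ == _); apply: eq_bigr => i _; rewrite ffunE.
Qed.

Lemma hcomplete0 x : hcomplete 0 x = 1.
Proof.
rewrite (@hcomplete_ord 1) // (big_pred1 [ffun=> ord0]) => [|f].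
  by rewrite big1 // => i _; rewrite ffunE expr0.
apply/eqP/eqP => [/eqP f0|->]; last by rewrite big1 // => i _; rewrite ffunE.
by apply/ffunP => i; rewrite ffunE; apply/val_inj; rewrite /= ord1.
Qed.

Lemma hcomplete_norm_le k x : (forall i, `|x i| <= 4^-1) -> `|hcomplete k x| <= 2 ^+ h.
Proof.
move=> x_le; apply: le_trans (ler_norm_sum _ _ _) _.
by apply: le_trans (sum_monomials_le x_le (fun f _ => leq0n _)) _; rewrite mulr1.
Qed.

Definition hpoly K x : {poly C} := \prod_(i < h) \sum_(j < K) ((x i)%:P * 'X) ^+ j.

Lemma coef_hpoly K k x : (k < K)%N -> (hpoly K x)`_k = hcomplete k x.
Proof.
move=> kK; rewrite (hcomplete_ord _ kK) /hpoly bigA_distr_bigA /= coef_sum.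
rewrite [RHS]big_mkcond; apply: eq_bigr => f _ /=.
have -> : \prod_i ((x i)%:P * 'X) ^+ f i =
    (\prod_i x i ^+ f i)%:P * 'X^(\sum_i (f i : nat)).
  rewrite -prodrXr rmorph_prod -big_split /=; apply: eq_bigr => i _.
  by rewrite exprMn rmorphXn.
by rewrite coefCM coefXn eq_sym; case: eqP; rewrite ?mulr1 ?mulr0.
Qed.

Definition prod1BX x : {poly C} := \prod_(i < h) (1 - (x i)%:P * 'X).

Lemma prod1BX_hpoly K x : exists Q, prod1BX x * hpoly K x = 1 + 'X^K * Q.
Proof.
have -> : prod1BX x * hpoly K x = \prod_(i < h) (1 - ((x i)%:P * 'X) ^+ K).
  rewrite -big_split /=; apply: eq_bigr => i _.
  by rewrite -opprB mulNr -subrX1 opprB.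
apply: (big_ind (fun q => exists Q, q = 1 + 'X^K * Q)).
- by exists 0; rewrite mulr0 addr0.
- by move=> _ _ [Q1 ->] [Q2 ->]; exists (Q1 + Q2 + 'X^K * Q1 * Q2); ring.
- by move=> i _; exists (- (x i)%:P ^+ K); rewrite exprMn; ring.
Qed.

Variables (x : 'I_h -> C).
Hypothesis x_le : forall i, `|x i| <= 4^-1.

Lemma norm_le_half i : `|x i| <= 2^-1.
Proof. exact: le_trans (x_le i) (quarter_le_half _). Qed.

Let L := \prod_(i < h) (1 - x i)^-1.

Lemma prod_sum_expr K :
  \prod_(i < h) \sum_(j < K) x i ^+ j = L * \prod_(i < h) (1 - x i ^+ K).
Proof.
rewrite /L -big_split /=; apply: eq_bigr => i _.
have x1_neq0 := subr1_neq0 (norm_le_half_lt1 (norm_le_half i)).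
apply: (mulfI x1_neq0); rewrite mulrA mulfV // mul1r.
by rewrite -opprB mulNr -subrX1 opprB.
Qed.

Lemma sum_hcomplete_ord K : \sum_(k < K) hcomplete k x =
  \sum_(f : {ffun 'I_h -> 'I_K} | (\sum_i (f i : nat) < K)%N) \prod_i x i ^+ f i.
Proof.
under eq_bigr => k _ do rewrite (hcomplete_ord x (ltn_ord k)) big_mkcond.
rewrite exchange_big [RHS]big_mkcond; apply: eq_bigr => f _ /=.
case: ltnP => [fK|Kf]; last first.
  by rewrite big1 // => k _; rewrite gtn_eqF // (leq_trans (ltn_ord k)).
rewrite (bigD1 (Ordinal fK)) //= eqxx [X in _ + X]big1 ?addr0 // => k kf.
by rewrite ifF //; apply: contraNF kf => /eqP fk; apply/eqP/val_inj.
Qed.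

Lemma hcomplete_partial_error K : `|\sum_(k < K) hcomplete k x - L| <=
  (2 ^ h + 2 ^ h * (h * 2 ^ h))%:R * 2^-1 ^+ K.
Proof.
rewrite sum_hcomplete_ord.
pose tail := \sum_(f : {ffun 'I_h -> 'I_K} | ~~ (\sum_i (f i : nat) < K)%N)
  \prod_i x i ^+ f i.
have -> : \sum_(f : {ffun 'I_h -> 'I_K} | (\sum_i (f i : nat) < K)%N) \prod_i x i ^+ f i
    = \prod_(i < h) \sum_(j < K) x i ^+ j - tail.
  rewrite bigA_distr_bigA /= [X in _ = X - _](bigID (fun f : {ffun 'I_h -> 'I_K} =>
    \sum_i (f i : nat) < K)%N).
  by rewrite addrK.
rewrite prod_sum_expr addrAC -[X in _ - X - _](mulr1 L) -mulrBr.
apply: le_trans (ler_normB _ _) _; rewrite normrM natrD mulrDl addrC.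
apply: lerD.
  rewrite natrX; apply: le_trans (ler_norm_sum _ _ _) (sum_monomials_le x_le _).
  by move=> f; rewrite -leqNgt.
have half_K : 0 <= (2^-1 : C) ^+ K <= 1.
  by rewrite exprn_ge0 ?exprn_ile1 ?half_ge0 ?half_le1.
have xK_le i : `|x i ^+ K| <= 2^-1 ^+ K.
  by rewrite normrX lerXn2r ?nnegrE ?normr_ge0 ?half_ge0 ?norm_le_half.
have [_ prod_le] := prod1B_bounds half_K xK_le.
rewrite natrM natrX -mulrA ler_pM //.
apply: (@le_trans _ _ (\prod_(i < h) (2 : C))); last by rewrite prodr_const card_ord.
rewrite /L normr_prod ler_prod // => i _.
by rewrite normr_ge0 norm_inv1B_le2 ?norm_le_half.
Qed.

Lemma hcomplete_series :
  series_to (fun k => if k == 0%N then 1 else hcomplete k x) L.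
Proof.
apply: series_to_geometric => K.
rewrite (eq_bigr (fun k : 'I_K => hcomplete k x)); first exact: hcomplete_partial_error.
by move=> [[|k] kK] _ //=; rewrite hcomplete0.
Qed.

End CompleteHomogeneous.

Lemma roots_nz_poly_eq0 (F : numFieldType) (q : {poly F}) :
  (forall t, t != 0 -> q.[t] = 0) -> q = 0.
Proof.
move=> q_nz; apply: (@roots_geq_poly_eq0 _ _ [seq i.+1%:R | i <- iota 0 (size q)]).
- by apply/allP => _ /mapP [i _ ->]; rewrite /root q_nz // pnatr_eq0.
- by rewrite map_inj_uniq ?iota_uniq // => i j /eqP; rewrite eqr_nat => /eqP [].
- by rewrite size_map size_iota.
Qed.

Lemma exprz_ge0_abs (F : fieldType) (t : F) (m : int) : 0 <= m -> t ^+ absz m = t ^ m.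
Proof. by move=> m_ge0; rewrite -{2}(gez0_abs m_ge0). Qed.

Section Kernel.
Variables (R : realType) (h : nat) (S : seq int) (p : int -> R).
Hypotheses (Suniq : uniq S) (ppos : forall s, s \in S -> 0 < p s)
  (Psym : forall u : R[i], u != 0 -> stepP S p u = stepP S p u^-1)
  (Sle : forall s, s \in S -> s <= h%:Z).
Local Notation C := R[i].

(* Comparing the Laurent coefficients of [P(u)] and [P(1/u)]: a step
   [s < -h] would force the step [-s > h]. *)
Lemma step_ge_opp s : s \in S -> - (h%:Z) <= s.
Proof.
move=> Ss; rewrite leNgt; apply/negP => s_lt.
pose N := \sum_(s <- S) absz s.
have S_bound s' : s' \in S -> - (N%:Z) <= s' <= N%:Z.
  move=> Ss'; have : (absz s' <= N)%N by rewrite /N (bigD1_seq s') //= leq_addr.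
  lia.
pose A : {poly C} := \sum_(s <- S) (p s)%:C%C *: 'X^(absz (s + N%:Z)).
pose B : {poly C} := \sum_(s <- S) (p s)%:C%C *: 'X^(absz (N%:Z - s)).
have AB : A = B.
  apply/eqP; rewrite -subr_eq0; apply/eqP/roots_nz_poly_eq0 => t t_neq0.
  rewrite hornerD hornerN !horner_sum; apply/eqP; rewrite subr_eq0; apply/eqP.
  transitivity (t ^+ N * stepP S p t).
    rewrite /stepP mulr_sumr; apply: eq_big_seq => s' Ss'; rewrite hornerZ hornerXn.
    have sN := S_bound s' Ss'; rewrite exprz_ge0_abs; last by lia.
    by rewrite expfzDr // mulrA mulrC.
  rewrite Psym // /stepP mulr_sumr; apply: eq_big_seq => s' Ss'; rewrite hornerZ hornerXn.
  have sN := S_bound s' Ss'; rewrite exprz_ge0_abs; last by lia.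
  by rewrite expfzDr // exprz_inv mulrCA.
have coefA : A`_(absz (s + N%:Z)) = (p s)%:C%C.
  rewrite coef_sum (bigD1_seq s) //= coefZ coefXn eqxx mulr1.
  rewrite big_seq_cond big1 ?addr0 // => s' /andP [Ss' s's].
  rewrite coefZ coefXn; case: eqP; rewrite ?mulr0 // => e; exfalso.
  have := S_bound s Ss; have := S_bound s' Ss'; move/eqP: s's; lia.
have coefB : B`_(absz (s + N%:Z)) = 0.
  rewrite coef_sum big_seq big1 // => s' Ss'.
  rewrite coefZ coefXn; case: eqP; rewrite ?mulr0 // => e; exfalso.
  have := S_bound s Ss; have := S_bound s' Ss'; have := Sle Ss'; lia.
have : (p s)%:C%C = 0 :> C by rewrite -coefA AB coefB.
by rewrite -(rmorph0 (real_complex R)) => /complexI/eqP; rewrite gt_eqF ?ppos.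
Qed.

Lemma horner_kernel_poly (z t : C) : t != 0 ->
  (kernel_poly S p h z).[t] = t ^+ h * (1 - z * stepP S p t).
Proof.
move=> t_neq0; rewrite /kernel_poly hornerD hornerN hornerZ horner_sum hornerXn.
rewrite /stepP mulrBr mulr1 !mulr_sumr; congr (_ - _).
apply: eq_big_seq => s Ss; rewrite hornerZ hornerXn.
have s_ge := step_ge_opp Ss; rewrite exprz_ge0_abs; last by lia.
by rewrite expfzDr // (_ : t ^ (h%:Z) = t ^+ h) //; ring.
Qed.

Lemma size_kernel_poly (z : C) : (size (kernel_poly S p h z) <= (h + h).+1)%N.
Proof.
apply/leq_sizeP => j hj; rewrite /kernel_poly coefB coefZ coef_sum coefXn.
rewrite (_ : (j == h) = false); last by apply/negbTE; lia.
rewrite big_seq big1 ?mulr0 ?subr0 // => s Ss; rewrite coefZ coefXn.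
have s_ge := step_ge_opp Ss; have s_le := Sle Ss.
by rewrite (_ : (j == _) = false) ?mulr0 //; apply/negbTE; lia.
Qed.

Section Factorisation.
Variables (z : C) (x : 'I_h -> C).
Hypothesis x_roots : \prod_(i < h) ('X - (x i)%:P) %| kernel_poly S p h z.

Let Pu := \prod_(i < h) ('X - (x i)%:P).
Let L := kernel_poly S p h z %/ Pu.

Let kernelE : kernel_poly S p h z = L * Pu.
Proof. by rewrite /L divpK. Qed.

Let size_L : (size L <= h.+1)%N.
Proof.
have [->|L_neq0] := eqVneq L 0; first by rewrite size_poly0.
have Pu_neq0 : Pu != 0 by apply/monic_neq0/monic_prod_XsubC.
have := size_kernel_poly z; rewrite kernelE size_mul //.
rewrite size_prod_XsubC [index_enum _]unlock -enumT size_enum_ord addnS /=.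
by move=> size_le; rewrite -(leq_add2r h) addSn.
Qed.

Let Lrev := \poly_(m < h.+1) L`_(h - m).

Let horner_Lrev t : t != 0 -> Lrev.[t] = t ^+ h * L.[t^-1].
Proof.
move=> t_neq0; rewrite horner_poly (horner_coef_wide _ size_L) mulr_sumr.
rewrite [RHS](reindex_inj rev_ord_inj) /=; apply: eq_bigr => m _.
rewrite subSS; have mh : (m <= h)%N by rewrite -ltnS.
have -> : t ^+ h = t ^+ m * t ^+ (h - m) by rewrite -exprD subnKC.
have tm_neq0 : t ^+ (h - m) != 0 by rewrite expf_neq0.
by rewrite exprVn -mulrA [t ^+ (h - m) * _]mulrCA mulfV // mulr1 mulrC.
Qed.

Let horner_prod1BX t : t != 0 -> (prod1BX x).[t] = t ^+ h * Pu.[t^-1].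
Proof.
move=> t_neq0; rewrite /prod1BX /Pu !horner_prod.
transitivity (\prod_(i < h) (t * (t^-1 - x i))); last first.
  rewrite big_split /= prodr_const card_ord; congr (_ * _).
  by apply: eq_bigr => i _; rewrite hornerXsubC.
by apply: eq_bigr => i _; rewrite !hornerE mulrBr mulfV // mulrC.
Qed.

(* The kernel is self-reciprocal at degree [2h] by the symmetry of [P]. *)
Lemma kernel_poly_factor :
  exists2 M : {poly C}, (size M <= h.+1)%N & kernel_poly S p h z = M * prod1BX x.
Proof.
exists Lrev; first exact: size_poly.
apply/eqP; rewrite -subr_eq0; apply/eqP/roots_nz_poly_eq0 => t t_neq0.
rewrite hornerD hornerN hornerM horner_Lrev // horner_prod1BX //.
have tV_neq0 : t^-1 != 0 by rewrite invr_eq0.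
have LPu : L.[t^-1] * Pu.[t^-1] = t^-1 ^+ h * (1 - z * stepP S p t).
  by rewrite -hornerM -kernelE horner_kernel_poly // -Psym.
have -> : t ^+ h * L.[t^-1] * (t ^+ h * Pu.[t^-1]) =
          t ^+ h * (t ^+ h * (L.[t^-1] * Pu.[t^-1])) by ring.
have tK : t ^+ h * t^-1 ^+ h = 1 by rewrite -exprMn mulfV // expr1n.
by rewrite LPu (mulrA (t ^+ h) (t^-1 ^+ h)) tK mul1r horner_kernel_poly // subrr.
Qed.

End Factorisation.

Definition hcompletez (x : 'I_h -> C) (j : int) : C :=
  if j < 0 then 0 else hcomplete (absz j) x.

Lemma hcompletez_nat x (k : nat) : hcompletez x k%:Z = hcomplete k x.
Proof. by rewrite /hcompletez ltNge lez_nat leq0n. Qed.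

Lemma hcompletez_rec (z : C) (x : 'I_h -> C) k :
  \prod_(i < h) ('X - (x i)%:P) %| kernel_poly S p h z -> 0 < k ->
  hcompletez x k = z * \sum_(s <- S) (p s)%:C%C * hcompletez x (k - s).
Proof.
move=> x_roots k_gt0; have [M size_M kerE] := kernel_poly_factor x_roots.
rewrite -(gez0_abs (ltW k_gt0)) hcompletez_nat; set n := absz k.
have n_gt0 : (0 < n)%N by rewrite /n; lia.
have [Q HQ] := prod1BX_hpoly (h + n).+1 x.
(* As [size M <= h.+1], coefficient [h + n] of [M * (1 + 'X^(h + n).+1 * Q)] is 0. *)
have : (kernel_poly S p h z * hpoly (h + n).+1 x)`_(h + n) = 0.
  rewrite kerE -mulrA HQ mulrDr mulr1 coefD mulrCA coefXnM ltnSn addr0.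
  by rewrite nth_default // (leq_trans size_M); lia.
rewrite /kernel_poly mulrBl coefB coefXnM ltnNge leq_addr /= addKn.
rewrite coef_hpoly; last by lia.
move/eqP; rewrite subr_eq0 => /eqP ->.
rewrite -scalerAl coefZ mulr_suml coef_sum; congr (_ * _).
apply: eq_big_seq => s Ss; rewrite -scalerAl coefZ coefXnM; congr (_ * _).
have s_ge := step_ge_opp Ss; have s_le := Sle Ss.
rewrite /hcompletez; case: ifP => ks; first by rewrite ifT //; lia.
rewrite ifF; last by lia.
by rewrite coef_hpoly; [congr (hcomplete _ _); lia | lia].
Qed.

End Kernel.

Section Expansion.
Variables (R : realType) (h : nat) (S : seq int) (p : int -> R).
Hypotheses (Suniq : uniq S) (ppos : forall s, s \in S -> 0 < p s)
  (Psym : forall u : R[i], u != 0 -> stepP S p u = stepP S p u^-1)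
  (Sle : forall s, s \in S -> s <= h%:Z).
Local Notation C := R[i].
Variables (z : C) (x : 'I_h -> C).
Hypotheses (x_roots : \prod_(i < h) ('X - (x i)%:P) %| kernel_poly S p h z)
  (x_le : forall i, `|x i| <= 4^-1)
  (z_le : `|z| * (\sum_(s <- S) p s)%:C%C <= 4^-1).

Lemma Gpartial_hcomplete_error N k :
  `|hcomplete k x - Gpartial S p z N k%:Z| <= 2 ^+ h * 4^-1 ^+ N.
Proof.
rewrite -hcompletez_nat.
apply: le_trans (@Gpartial_error _ _ _ _ ppos (hcompletez x) (2 ^+ h) N k _ _ _ _) _.
- by rewrite (hcompletez_nat x 0) hcomplete0.
- by move=> j j_lt0; rewrite /hcompletez j_lt0.
- by move=> j; apply: hcompletez_rec.
- move=> j; rewrite /hcompletez; case: ifP => _.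
    by rewrite normr0 exprn_ge0.
  exact: hcomplete_norm_le.
rewrite ler_wpM2l ?exprn_ge0 // lerXn2r ?nnegrE ?mulr_ge0 ?normr_ge0 ?invr_ge0 //.
by rewrite rmorph_sum big_seq sumr_ge0 // => s /ppos/ltW; rewrite lecR.
Qed.

Lemma Gcoef_series k :
  series_to (fun n => (Gcoef S p k%:Z n)%:C%C * z ^+ n) (hcomplete k x).
Proof.
apply: (@series_to_geometric _ _ _ (2 ^ h)) => N; rewrite distrC natrX.
apply: le_trans (Gpartial_hcomplete_error N k) _.
by rewrite ler_wpM2l ?exprn_ge0 // lerXn2r ?nnegrE ?invr_ge0 ?quarter_le_half.
Qed.

Lemma Mcoef_series :
  series_to (fun n => (Mcoef S p n)%:C%C * z ^+ n) (\prod_(i < h) (1 - x i)^-1).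
Proof.
pose c := (2 ^ h * h.+1 + (2 ^ h + 2 ^ h * (h * 2 ^ h)))%N.
apply: (@series_to_geometric _ _ _ c) => N; have N_lt := ltn_expl N (ltnSn 1).
(* [K] exceeds the altitude [N * h] of every walk of length [N], and
   [K * 4^-N = h.+1 * 2^-N]. *)
pose K := (2 ^ N * h.+1)%N.
have -> : \sum_(n < N) (Mcoef S p n)%:C%C * z ^+ n = \sum_(k < K) Gpartial S p z N k%:Z.
  rewrite /Gpartial exchange_big; apply: eq_bigr => n _.
  have nhK : (n * h < K)%N by rewrite /K; have := ltn_ord n; nia.
  by rewrite (Mcoef_sum_Gcoef p Sle nhK) rmorph_sum mulr_suml.
rewrite -(subrK (\sum_(k < K) hcomplete k x) (\sum_(k < K) _)) -sumrB -addrA.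
apply: le_trans (ler_normD _ _) _; rewrite natrD mulrDl lerD //.
  apply: le_trans (ler_norm_sum _ _ _) _.
  under eq_bigr => k _ do rewrite distrC.
  apply: le_trans (ler_sum _ (fun (k : 'I_K) _ => Gpartial_hcomplete_error N k)) _.
  have half2 : 2^-1 ^+ N * 2 ^+ N = 1 :> C.
    by rewrite -exprMn mulVf ?expr1n ?pnatr_eq0.
  have -> : 4^-1 = 2^-1 * 2^-1 :> C by rewrite -invfM -natrM.
  rewrite sumr_const card_ord -[_ *+ _]mulr_natl (natrM _ (2 ^ N) h.+1).
  rewrite (natrM _ (2 ^ h) h.+1) !natrX exprMn le_eqVlt; apply/orP; left; apply/eqP.
  set a : C := 2 ^+ N; set b : C := 2^-1 ^+ N.
  transitivity (2 ^+ h * h.+1%:R * b * (b * a)); first by ring.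
  by rewrite half2 mulr1.
apply: le_trans (hcomplete_partial_error x_le K) _.
have NK : (N <= K)%N by rewrite /K; nia.
rewrite ler_wpM2l // -(subnK NK) exprD ler_piMl ?exprn_ge0 ?half_ge0 //.
by rewrite exprn_ile1 ?half_ge0 ?half_le1.
Qed.

End Expansion.

Section Near0.
Variable R : realType.
Local Notation C := R[i].

Definition near0 (P : C -> Prop) :=
  exists r : R, 0 < r /\ forall z : C, 0 < `|z| < r%:C%C -> P z.

Lemma near0_and (P Q : C -> Prop) : near0 P -> near0 Q -> near0 (fun z => P z /\ Q z).
Proof.
move=> [r [r_gt0 rP]] [d [d_gt0 dQ]]; exists (Order.min r d).
split=> [|z /andP [z_gt0 z_lt]]; first by rewrite lt_min r_gt0.
by split; [apply: rP | apply: dQ];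
  rewrite z_gt0 (lt_le_trans z_lt) // lecR ge_min lexx ?orbT.
Qed.

Lemma near0_forall n (P : 'I_n -> C -> Prop) :
  (forall i, near0 (P i)) -> near0 (fun z => forall i, P i z).
Proof.
move=> P_near.
suff /(_ n (leqnn n)) : forall m, (m <= n)%N ->
    near0 (fun z => forall i : 'I_n, (i < m)%N -> P i z).
  by move=> [r [r_gt0 rP]]; exists r; split=> // z /rP zP i; exact: zP.
elim=> [|m IH] mn; first by exists 1; split=> // z _ [].
have [r [r_gt0 rP]] := near0_and (IH (ltnW mn)) (P_near (Ordinal mn)).
exists r; split=> // z /rP [Pm Pz] i.
rewrite ltnS leq_eqVlt => /orP [/eqP im|]; last exact: Pm.
by have -> : i = Ordinal mn by apply: val_inj.
Qed.

Lemma near0_norm_mul_le (c e : R) : 0 <= c -> 0 < e ->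
  near0 (fun z => `|z| * c%:C%C <= e%:C%C).
Proof.
move=> c_ge0 e_gt0; have c1_gt0 : 0 < c + 1 by rewrite ltr_wpDl.
exists (e / (c + 1)); split=> [|z /andP [_ /ltW z_le]]; first by rewrite divr_gt0.
apply: le_trans (ler_wpM2r _ z_le) _; first by rewrite lecR.
by rewrite -rmorphM lecR mulrAC ler_pdivrMr // ler_pM2l // lerDl.
Qed.

End Near0.

Unset Implicit Arguments.

Theorem theorem4p1 (R : realType) (h : nat) (S : seq int) (p : int -> R)
  (hpos : (1 <= h)%N) (Suniq : uniq S)
  (ppos : forall s, s \in S -> 0 < p s)
  (Psym : forall u : R[i], u != 0 -> stepP S p u = stepP S p u^-1)
  (hmax : h%:Z \in S) (Sle : forall s, s \in S -> s <= h%:Z)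
  (u : 'I_h -> R[i] -> R[i]) (usmall : small_roots S p u) :
  exists r : R, 0 < r /\ forall z : R[i], 0 < `|z| < r%:C%C ->
    [/\ series_to (fun n => (Mcoef S p n)%:C%C * z ^+ n)
          (\prod_(i < h) (1 - u i z)^-1),
        series_to (fun k => if k == 0%N then 1 else hcomplete k (fun i => u i z))
          (\prod_(i < h) (1 - u i z)^-1)
      & forall k : nat, (1 <= k)%N ->
          series_to (fun n => (Gcoef S p k%:Z n)%:C%C * z ^+ n)
            (hcomplete k (fun i => u i z))].
Proof.
have [roots_near u_small] := usmall.
have quarter_gt0 : 0 < 4^-1 :> R by rewrite invr_gt0 ltr0n.
have u_near : near0 (fun z => forall i, `|u i z| <= 4^-1).
  apply: near0_forall => i; have [d [d_gt0 dP]] := u_small i _ quarter_gt0.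
  by exists d; split=> // z /dP /ltW; rewrite fmorphV rmorph_nat.
have P_ge0 : 0 <= \sum_(s <- S) p s by rewrite big_seq sumr_ge0 // => s /ppos/ltW.
have [r [r_gt0 rP]] := near0_and (near0_and roots_near u_near)
  (near0_norm_mul_le P_ge0 quarter_gt0).
exists r; split=> // z /rP [[x_roots x_le] z_le].
rewrite fmorphV rmorph_nat in z_le.
split; [exact: Mcoef_series | exact: hcomplete_series |].
by move=> k _; exact: Gcoef_series.
Qed.
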